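(* Let $r>1$ be real and let $a,b\in\mathbb{S}$ be such that the open interval $(\sigma_{-r}(a),\sigma_{-r}(b))$ is a gap of $\sigma_{-r}(\mathbb{S})$. Then $b\in\mathbb{N}$, i.e. $v_p(b)<\infty$ for every prime $p$ and $v_p(b)=0$ for all but finitely many $p$.
   Context: A Steinitz number is a formal product $n=\prod_p p^{\alpha_p}$ over all primes with $\alpha_p\in\mathbb{Z}_{\ge0}\cup\{\infty\}$, $v_p(n)=\alpha_p$; $\mathbb{S}$ is the set of Steinitz numbers, and $\mathbb{N}\subset\mathbb{S}$ consists of those with all exponents finite and almost all zero. $\sigma_{-r}$ is defined on $\mathbb{S}$ multiplicatively by $\sigma_{-r}(p^\alpha)=\sum_{i=0}^\alpha p^{-ri}$ for finite $\alpha$ and $\sigma_{-r}(p^\infty)=\frac1{1-p^{-r}}$. A gap of $\sigma_{-r}(\mathbb{S})$ is a bounded connected component of $\mathbb{R}\setminus\sigma_{-r}(\mathbb{S})$. *)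

From HB Require Import structures.
From mathcomp Require Import all_boot all_order all_algebra.
From mathcomp Require Import all_classical all_reals all_analysis.
Set Implicit Arguments. Unset Strict Implicit. Unset Printing Implicit Defensive.
Import Order.TTheory GRing.Theory Num.Theory.
Import numFieldNormedType.Exports.
Local Open Scope classical_set_scope.
Local Open Scope ring_scope.

(* A Steinitz number is encoded by its exponent function v : nat -> option nat,
   where v p = Some k means v_p = k and v p = None means v_p = oo. *)
Definition exponents := nat -> option nat.

Definition is_steinitz (v : exponents) : Prop :=
  forall n, ~~ prime n -> v n = Some 0%N.

Definition steinitz_in_N (v : exponents) : Prop :=
  (forall p, prime p -> v p <> None) /\
  (exists M : nat, forall p, prime p -> (M <= p)%N -> v p = Some 0%N).

Definition sigma_loc (R : realType) (r : R) (p : nat) (a : option nat) : R :=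
  let q := (p%:R) `^ (- r) in
  match a with
  | Some k => \sum_(i < k.+1) q ^+ i
  | None => (1 - q)^-1
  end.

Definition sigma_partial (R : realType) (r : R) (v : exponents) (N : nat) : R :=
  \prod_(p < N | prime p) sigma_loc r p (v p).

Definition sigma (R : realType) (r : R) (v : exponents) : R :=
  limn (sigma_partial r v).

Definition sigma_image (R : realType) (r : R) : set R :=
  [set y | exists v, is_steinitz v /\ y = sigma r v].

Definition is_gap (R : realType) (E : set R) (G : set R) : Prop :=
  bounded_set G /\ exists x, (~` E) x /\ G = connected_component (~` E) x.

From HB Require Import structures.
From mathcomp Require Import all_boot all_order all_algebra.
From mathcomp Require Import all_classical all_reals all_analysis.
From mathcomp Require Import ring lra.
Import Order.TTheory GRing.Theory Num.Theory.
Import numFieldNormedType.Exports.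
Local Open Scope classical_set_scope.
Local Open Scope ring_scope.
Set Implicit Arguments. Unset Strict Implicit. Unset Printing Implicit Defensive.

(* sigma_{-r}(v) is the limit of the nondecreasing partial products over the
   primes p < N; they stay below exp (2 r / (r - 1)) because each local factor
   is at most exp (2 p^-r) and sum_n n^-r <= r / (r - 1).  If b is not in N,
   sigma_{-r}(b) is a limit from below of values of sigma_{-r} at finite Steinitz
   numbers: if v_p(b) = oo, truncate b at a large bound and replace p^oo by p^K
   with K large; if infinitely many primes divide b, merely truncate b at a
   large bound.  Such a value falls into (sigma_{-r}(a), sigma_{-r}(b)), which
   therefore is not a gap. *)

(* The tangent-line inequality at m + 1 for the convex map x |-> x^-s. *)
Lemma powRN_sub_ge (R : realType) (s m : R) : 0 < s -> 0 < m ->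
  s * (m + 1) `^ (- (s + 1)) <= m `^ (- s) - (m + 1) `^ (- s).
Proof.
move=> s_gt0 m_gt0; have m1_gt0 : 0 < m + 1 by rewrite addr_gt0.
set u := (m + 1)^-1.
have u_gt0 : 0 < u by rewrite invr_gt0.
have ln_gap : u <= ln (m + 1) - ln m.
  have u_lt1 : u < 1 by rewrite invf_lt1 //; lra.
  have := @le_ln1Dx R (- u) ltac:(lra).
  have -> : 1 - u = m / (m + 1) by rewrite /u; field; rewrite gt_eqF.
  rewrite ln_div ?posrE //; lra.
have expR_gap : 1 + s * u <= expR (s * (ln (m + 1) - ln m)).
  by apply: le_trans (expR_ge1Dx _); rewrite lerD2l ler_pM2l.
have Em : m `^ (- s) = (m + 1) `^ (- s) * expR (s * (ln (m + 1) - ln m)).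
  by rewrite /powR !gt_eqF // -expRD; congr expR; ring.
have Em1 : (m + 1) `^ (- (s + 1)) = (m + 1) `^ (- s) * u.
  rewrite /powR gt_eqF // /u -[X in _ * X^-1](@lnK R) ?posrE // -expRN -expRD.
  by congr expR; ring.
rewrite Em Em1; have : 0 < (m + 1) `^ (- s) by rewrite powR_gt0.
set E := (m + 1) `^ (- s); set X := expR _ in expR_gap *; nra.
Qed.

Section powRN_sum.
Variables (R : realType) (r : R).
Hypothesis r_gt1 : 1 < r.

Lemma sum_powRN_telescope N :
  (r - 1) * \sum_(n < N.+2) n%:R `^ (- r) + N.+1%:R `^ (- (r - 1)) <= r.
Proof.
have s_gt0 : 0 < r - 1 by rewrite subr_gt0.
elim: N => [|N IH].
  (* [0 `^ (- r) = 0] and [1 `^ (- r) = 1] *)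
  by rewrite !big_ord_recl big_ord0 /= powR0 ?oppr_eq0 ?gt_eqF ?powR1 //; lra.
have := powRN_sub_ge s_gt0 (ltr0Sn R N); rewrite subrK natr1 big_ord_recr /=.
set S := \sum_(i < N.+2) _ in IH *; nra.
Qed.

Lemma sum_powRN_le N : \sum_(n < N) n%:R `^ (- r) <= r / (r - 1).
Proof.
have s_gt0 : 0 < r - 1 by rewrite subr_gt0.
rewrite ler_pdivlMr // mulrC.
have := sum_powRN_telescope N; rewrite !big_ord_recr /= !mulrDr.
have := mulr_ge0 (ltW s_gt0) (@powR_ge0 R N%:R (- r)).
have := mulr_ge0 (ltW s_gt0) (@powR_ge0 R N.+1%:R (- r)).
have := @powR_ge0 R N.+1%:R (- (r - 1)).
lra.
Qed.

End powRN_sum.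

Lemma sigma_loc0 (R : realType) (r : R) p : sigma_loc r p (Some 0%N) = 1.
Proof. by rewrite /sigma_loc big_ord1 expr0. Qed.

Section local_factor.
Variables (R : realType) (r : R) (p : nat).
Hypotheses (r_ge1 : 1 <= r) (p_prime : prime p).

Lemma powRN_prime_bounds : 0 < p%:R `^ (- r) <= 2^-1.
Proof.
have p_ge2 : (2 : R) <= p%:R by rewrite (ler_nat R 2 p) prime_gt1.
have p_le : (p%:R : R) <= p%:R `^ r.
  by rewrite -{1}(@powRr1 R p%:R) ?ler0n //; apply: ler_powR => //; lra.
rewrite powRN invr_gt0 powR_gt0 /=; last lra.
by rewrite lef_pV2 ?posrE ?powR_gt0 //; lra.
Qed.

Lemma sigma_loc_Some k : sigma_loc r p (Some k) =
  sigma_loc r p None * (1 - (p%:R `^ (- r)) ^+ k.+1).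
Proof.
have /andP[q_gt0 q_le] := powRN_prime_bounds; rewrite /sigma_loc /=.
set q := p%:R `^ (- r) in q_gt0 q_le *.
have := subrX1 q k.+1; set S := \sum_(i < k.+1) _ => geom.
have -> : 1 - q ^+ k.+1 = (1 - q) * S by rewrite -opprB geom; ring.
by field; rewrite subr_eq0 eq_sym lt_eqF //; lra.
Qed.

Lemma sigma_loc_ge1 a : 1 <= sigma_loc r p a.
Proof.
have /andP[q_gt0 q_le] := powRN_prime_bounds; rewrite /sigma_loc /=.
case: a => [k|]; last by rewrite invf_ge1; lra.
rewrite big_ord_recl expr0 lerDl; apply: sumr_ge0 => i _.
by rewrite exprn_ge0 // ltW.
Qed.

Lemma sigma_loc_gt1 a : a <> Some 0%N -> 1 < sigma_loc r p a.
Proof.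
have /andP[q_gt0 q_le] := powRN_prime_bounds; rewrite /sigma_loc /=.
case: a => [[|k]|] a_neq0 //; last by rewrite invf_gt1; lra.
rewrite big_ord_recl expr0 ltrDl big_ord_recl /= expr1.
by apply: ltr_pwDl => //; apply: sumr_ge0 => i _; rewrite exprn_ge0 // ltW.
Qed.

Lemma sigma_loc_le_expR a : sigma_loc r p a <= expR (2 * p%:R `^ (- r)).
Proof.
have /andP[q_gt0 q_le] := powRN_prime_bounds.
have loc_None_le : sigma_loc r p None <= 1 + 2 * p%:R `^ (- r).
  rewrite /sigma_loc /=; set q := p%:R `^ (- r) in q_gt0 q_le *.
  rewrite -[_^-1]mul1r ler_pdivrMr; [nra | lra].
apply: le_trans (expR_ge1Dx _); apply: le_trans loc_None_le.
case: a => [k|//]; rewrite sigma_loc_Some.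
have := sigma_loc_ge1 None; have : 0 < (p%:R `^ (- r)) ^+ k.+1 by rewrite exprn_gt0.
nra.
Qed.

End local_factor.

Lemma sigma_partialS (R : realType) (r : R) v N : sigma_partial r v N.+1 =
  sigma_partial r v N * (if prime N then sigma_loc r N (v N) else 1).
Proof. by rewrite /sigma_partial big_mkcond big_ord_recr /= -big_mkcond. Qed.

Section partial_products.
Variables (R : realType) (r : R) (v : exponents).
Hypothesis r_ge1 : 1 <= r.

Lemma sigma_partial_ge1 N : 1 <= sigma_partial r v N.
Proof.
apply: (big_ind (fun x => 1 <= x)) => // [x y|i pi]; first exact: mulr_ege1.
exact: sigma_loc_ge1.
Qed.

Lemma sigma_partial_nondecreasing :
  {homo sigma_partial r v : n m / (n <= m)%N >-> n <= m}.
Proof.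
apply/nondecreasing_seqP => N; rewrite sigma_partialS.
have := sigma_partial_ge1 N; case: ifP => [pN|_]; last by rewrite mulr1.
by have := sigma_loc_ge1 r_ge1 pN (v N); nra.
Qed.

Lemma sigma_partial_lt p : prime p -> v p <> Some 0%N ->
  sigma_partial r v p < sigma_partial r v p.+1.
Proof.
move=> p_prime vp_neq0; rewrite sigma_partialS p_prime.
by have := sigma_partial_ge1 p; have := sigma_loc_gt1 r_ge1 p_prime vp_neq0; nra.
Qed.

Lemma sigma_partial_le_expR N :
  sigma_partial r v N <= expR (2 * \sum_(n < N) n%:R `^ (- r)).
Proof.
have sum_le : \sum_(n < N | prime n) n%:R `^ (- r) <= \sum_(n < N) n%:R `^ (- r).
  by rewrite [leRHS](bigID (fun n : 'I_N => prime n)) /= lerDl sumr_ge0.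
apply: le_trans (_ : expR (2 * \sum_(n < N | prime n) n%:R `^ (- r)) <= _).
  rewrite mulr_sumr expR_sum; apply: ler_prod => n n_prime.
  by rewrite sigma_loc_le_expR // andbT (le_trans _ (sigma_loc_ge1 r_ge1 n_prime _)).
by rewrite ler_expR ler_pM2l.
Qed.

End partial_products.

Section convergence.
Variables (R : realType) (r : R) (v : exponents).
Hypothesis r_gt1 : 1 < r.
Let r_ge1 : 1 <= r. Proof. exact: ltW. Qed.

Lemma sigma_partial_bounded N : sigma_partial r v N <= expR (2 * (r / (r - 1))).
Proof.
apply: le_trans (sigma_partial_le_expR v r_ge1 N) _.
by rewrite ler_expR ler_pM2l // sum_powRN_le.
Qed.

Let sigma_partial_cvg_sup :
  sigma_partial r v @ \oo --> sup (range (sigma_partial r v)).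
Proof.
apply: nondecreasing_cvgn; first exact: sigma_partial_nondecreasing.
by exists (expR (2 * (r / (r - 1)))) => _ [n _ <-]; exact: sigma_partial_bounded.
Qed.

Lemma sigma_partial_cvg : sigma_partial r v @ \oo --> sigma r v.
Proof. by rewrite /sigma (cvg_lim _ sigma_partial_cvg_sup). Qed.

Lemma sigma_partial_le_sigma N : sigma_partial r v N <= sigma r v.
Proof.
apply: nondecreasing_cvgn_le; first exact: sigma_partial_nondecreasing.
by apply/cvg_ex; exists (sup (range (sigma_partial r v))).
Qed.

Lemma sigma_partial_gt y : y < sigma r v -> exists N, y < sigma_partial r v N.
Proof.
move=> y_lt; have [N _ gt_y] := cvgr_gt _ sigma_partial_cvg _ y_lt.
by exists N; apply: gt_y => /=.
Qed.

End convergence.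

Definition truncate (v : exponents) (M : nat) : exponents :=
  fun n => if (n < M)%N then v n else Some 0%N.

Definition set_exponent (v : exponents) (p k : nat) : exponents :=
  fun n => if n == p then Some k else v n.

Lemma is_steinitz_truncate v M : is_steinitz v -> is_steinitz (truncate v M).
Proof. by move=> sv n n_np; rewrite /truncate; case: ifP => // _; apply: sv. Qed.

Lemma is_steinitz_set_exponent v p k : prime p -> is_steinitz v ->
  is_steinitz (set_exponent v p k).
Proof.
move=> p_prime sv n n_np; rewrite /set_exponent; case: eqP => [n_p|_]; last exact: sv.
by rewrite n_p p_prime in n_np.
Qed.

Section truncation.
Variables (R : realType) (r : R).

Lemma sigma_eq_partial v M : (forall n, (M <= n)%N -> v n = Some 0%N) ->
  sigma r v = sigma_partial r v M.
Proof.
move=> v_tail; have partial_stable d : sigma_partial r v (M + d) = sigma_partial r v M.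
  elim: d => [|d IH]; first by rewrite addn0.
  by rewrite addnS sigma_partialS IH v_tail ?leq_addr // sigma_loc0; case: ifP => _; rewrite mulr1.
rewrite /sigma; apply: cvg_lim => //; apply: cvg_near_cst.
by exists M => // n /= Mn; rewrite -(subnKC Mn) partial_stable.
Qed.

Lemma sigma_truncate v M : sigma r (truncate v M) = sigma_partial r v M.
Proof.
rewrite (@sigma_eq_partial _ M); last by move=> n Mn; rewrite /truncate ltnNge Mn.
by apply: eq_bigr => i _; rewrite /truncate ltn_ord.
Qed.

Lemma sigma_partial_set_exponent v p k N : 1 <= r -> prime p -> (p < N)%N ->
  v p = None ->
  sigma_partial r (set_exponent v p k) N =
  sigma_partial r v N * (1 - (p%:R `^ (- r)) ^+ k.+1).
Proof.
move=> r_ge1 p_prime pN vp_None; rewrite /sigma_partial.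
rewrite (bigD1 (Ordinal pN)) // [in RHS](bigD1 (Ordinal pN)) //=.
rewrite /set_exponent eqxx vp_None sigma_loc_Some //.
rewrite (eq_bigr (fun i : 'I_N => sigma_loc r i (v i))); first by ring.
by move=> i /andP[_ /negbTE i_neq]; rewrite -val_eqE /= in i_neq; rewrite i_neq.
Qed.

End truncation.

Section approximation_from_below.
Variables (R : realType) (r : R) (b : exponents).
Hypotheses (r_gt1 : 1 < r) (sb : is_steinitz b).
Let r_ge1 : 1 <= r. Proof. exact: ltW. Qed.

Lemma sigma_approx_below_None p y : prime p -> b p = None -> y < sigma r b ->
  exists c, is_steinitz c /\ y < sigma r c < sigma r b.
Proof.
move=> p_prime bp_None y_lt.
have [M0 y_lt_M0] := sigma_partial_gt r_gt1 y_lt.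
pose M := maxn M0 p.+1; have pM : (p < M)%N by rewrite leq_max ltnSn orbT.
set P := sigma_partial r b M.
have y_lt_P : y < P.
  by apply: lt_le_trans y_lt_M0 _; apply: sigma_partial_nondecreasing; rewrite ?leq_maxl.
have P_ge1 : 1 <= P := sigma_partial_ge1 b r_ge1 M.
have P_le : P <= sigma r b := sigma_partial_le_sigma b r_gt1 M.
have /andP[q_gt0 q_le] := powRN_prime_bounds r_ge1 p_prime.
set q := p%:R `^ (- r) in q_gt0 q_le.
have q_lt1 : `|q| < 1 by rewrite ger0_norm; lra.
have eps_gt0 : 0 < (P - y) / P by apply: divr_gt0; lra.
have [K _ qK_lt] := cvgr_lt _ (cvg_expr q_lt1) _ eps_gt0.
have {qK_lt} : q ^+ K.+1 * P < P - y by rewrite -ltr_pdivlMr ?qK_lt //=; lra.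
have : 0 < q ^+ K.+1 by rewrite exprn_gt0.
exists (truncate (set_exponent b p K) M); split.
  by apply/is_steinitz_truncate/is_steinitz_set_exponent.
rewrite sigma_truncate sigma_partial_set_exponent // -/q -/P; apply/andP; split; nra.
Qed.

Lemma sigma_approx_below_tail y :
  (forall M, exists p, [/\ prime p, (M <= p)%N & b p <> Some 0%N]) ->
  y < sigma r b -> exists c, is_steinitz c /\ y < sigma r c < sigma r b.
Proof.
move=> b_tail y_lt; have [M y_lt_M] := sigma_partial_gt r_gt1 y_lt.
have [p [p_prime Mp bp_neq0]] := b_tail M.
exists (truncate b M); split; first exact: is_steinitz_truncate.
rewrite sigma_truncate y_lt_M /=.
apply: le_lt_trans (sigma_partial_nondecreasing b r_ge1 Mp) _.
apply: lt_le_trans (sigma_partial_lt r_ge1 p_prime bp_neq0) _.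
exact: sigma_partial_le_sigma.
Qed.

End approximation_from_below.

Lemma not_steinitz_in_N v : ~ steinitz_in_N v ->
  (exists p, prime p /\ v p = None) \/
  (forall M, exists p, [/\ prime p, (M <= p)%N & v p <> Some 0%N]).
Proof.
move=> vN; have [|fin] := pselect (exists p, prime p /\ v p = None); first by left.
right => M; apply: contrapT => no_tail; apply: vN; split.
  by move=> p p_prime vp_None; apply: fin; exists p.
by exists M => p p_prime Mp; apply: contrapT => vp_neq0; apply: no_tail; exists p.
Qed.

Lemma sigma_approx_below (R : realType) (r : R) b y : 1 < r -> is_steinitz b ->
  ~ steinitz_in_N b -> y < sigma r b ->
  exists c, is_steinitz c /\ y < sigma r c < sigma r b.
Proof.
move=> r_gt1 sb /not_steinitz_in_N [[p [p_prime bp_None]]|b_tail].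
  exact: sigma_approx_below_None bp_None.
exact: sigma_approx_below_tail.
Qed.

Lemma gap_neq0 (R : realType) (E G : set R) : is_gap E G -> G !=set0.
Proof. by move=> [_ [x [Ex ->]]]; exists x; apply: connected_component_refl. Qed.

Lemma gap_subsetC (R : realType) (E G : set R) : is_gap E G -> G `<=` ~` E.
Proof. by move=> [_ [x [_ ->]]]; apply: connected_component_sub. Qed.

Unset Implicit Arguments.

Theorem mainTheorem17 (R : realType) (r : R) (a b : exponents) :
  1 < r -> is_steinitz a -> is_steinitz b ->
  is_gap (sigma_image r) [set x : R | sigma r a < x < sigma r b] ->
  steinitz_in_N b.
Proof.
move=> r_gt1 _ sb gap; apply: contrapT => bN.
have [x /andP[ax xb]] := gap_neq0 gap.
have [c [sc c_in_gap]] := sigma_approx_below r_gt1 sb bN (lt_trans ax xb).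
by apply: (gap_subsetC gap c_in_gap); exists c.
Qed.
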